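(* In the multi-sender privacy game, let $\Psi'((\alpha^{(i)})_{i\in\mathbf{N}},\beta)=\xi'(\beta,(\alpha^{(i)})_{i\in\mathbf{N}})+\varrho\sum_{i\in\mathbf{N}}\zeta'_i(\alpha^{(i)})$. Any $((\alpha^{(i)*})_{i\in\mathbf{N}},\beta^* )\in\arg\min_{((\alpha^{(i)})_i,\beta)\in\prod_{i\in\mathbf{N}}A'_i\times B'}\Psi'((\alpha^{(i)})_i,\beta)$ is a Nash equilibrium, i.e. for every $j\in\mathbf{N}$ and $\bar\alpha^{(j)}\in A'_j$, $U_j((\alpha^{(i)*})_i,\beta^* )\le U_j(\bar\alpha^{(j)},(\alpha^{(i)*})_{i\neq j},\beta^* )$, and for every $\bar\beta\in B'$, $V((\alpha^{(i)*})_i,\beta^* )\le V((\alpha^{(i)*})_i,\bar\beta)$.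
   Context: Multi-sender privacy game. Let $n\ge 2$, $\mathbf{N}=\{1,\dots,n\}$, and let $\mathcal{X}$, $\mathcal{W}_i$, $\mathcal{Y}_i$ ($i\in\mathbf{N}$) be finite nonempty sets. $(X,(Z_i)_{i\in\mathbf{N}},(W_i)_{i\in\mathbf{N}})$ has joint probability mass function $p$ on $\mathcal{X}\times\mathcal{X}^n\times\prod_i\mathcal{W}_i$. Sender $i$ observes $(Z_i,W_i)$ and sends $Y_i\in\mathcal{Y}_i$ with $\mathbb{P}\{Y_i=y_i\mid Z_i=z_i,W_i=w_i\}=\alpha^{(i)}_{y_iz_iw_i}$, independently across senders given the observations, where $\alpha^{(i)}\in A'_i=\{\alpha^{(i)}:\alpha^{(i)}_{y_iz_iw_i}\in[0,1],\ \sum_{y_i}\alpha^{(i)}_{y_iz_iw_i}=1\ \forall(z_i,w_i)\in\mathcal{X}\times\mathcal{W}_i\}$. The receiver outputs $\hat X\in\mathcal{X}$ with $\mathbb{P}\{\hat X=\hat x\mid (Y_i)_i=(y_i)_i\}=\beta_{\hat x y_1\dots y_n}$, $\beta\in B'=\{\beta:\beta_{\hat x y_1\dots y_n}\in[0,1],\ \sum_{\hat x}\beta_{\hat x y_1\dots y_n}=1\ \forall (y_i)_i\}$. Let $d:\mathcal{X}\times\mathcal{X}\to\mathbb{R}_{\ge0}$ and $\varrho\in\mathbb{R}$. Define $\xi'(\beta,(\alpha^{(i)})_i)=\sum_{(y_1,z_1,w_1)}\cdots\sum_{(y_n,z_n,w_n)}\sum_{\hat x,x\in\mathcal{X}}d(x,\hat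 x)\beta_{\hat x y_1\dots y_n}\prod_{i\in\mathbf{N}}\alpha^{(i)}_{y_iz_iw_i}\,p(x,(z_i)_i,(w_i)_i)$, each $(y_i,z_i,w_i)$ ranging over $\mathcal{Y}_i\times\mathcal{X}\times\mathcal{W}_i$ (this is $\mathbb{E}\{d(X,\hat X)\}$). Define $\zeta'_j(\alpha^{(j)})=I(Y_j;W_j)=\sum_{y,w}P^j_{yw}\log\frac{P^j_{yw}}{P^j_yP^j_w}$ (with $0\log0=0$), where $P^j_w=\mathbb{P}\{W_j=w\}$, $P^j_{yw}=\sum_{z\in\mathcal{X}}\alpha^{(j)}_{yzw}\mathbb{P}\{Z_j=z,W_j=w\}$, $P^j_y=\sum_w P^j_{yw}$. Sender $j$'s cost: $U_j((\alpha^{(i)})_i,\beta)=\xi'(\beta,(\alpha^{(i)})_i)+\varrho\zeta'_j(\alpha^{(j)})$; receiver's cost: $V((\alpha^{(i)})_i,\beta)=\xi'(\beta,(\alpha^{(i)})_i)$. *)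

From mathcomp Require Import all_boot all_order all_algebra.
From mathcomp Require Import reals exp.
Set Implicit Arguments. Unset Strict Implicit. Unset Printing Implicit Defensive.
Import Order.TTheory GRing.Theory Num.Theory.
Local Open Scope ring_scope.

Section Game.
Variables (R : realType) (n : nat) (X : finType)
  (W Y : 'I_n -> finType).

(* joint pmf of (X, (Z_i)_i, (W_i)_i) *)
Definition Zvec := {ffun 'I_n -> X}.
Definition Wvec := {dffun forall i : 'I_n, W i}.
Definition Yvec := {dffun forall i : 'I_n, Y i}.

Definition is_pmf (p : X -> Zvec -> Wvec -> R) : Prop :=
  (forall x z w, 0 <= p x z w) /\ \sum_(x : X) \sum_(z : Zvec) \sum_(w : Wvec) p x z w = 1.

Definition in_A' (i : 'I_n) (a : Y i -> X -> W i -> R) : Prop :=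
  (forall y z w, 0 <= a y z w <= 1) /\ (forall z w, \sum_(y : Y i) a y z w = 1).

Definition in_B' (b : X -> Yvec -> R) : Prop :=
  (forall xh y, 0 <= b xh y <= 1) /\ (forall y, \sum_(xh : X) b xh y = 1).

Definition alphas := forall i : 'I_n, Y i -> X -> W i -> R.

(* xi' = E d(X, Xhat) *)
Definition xi' (p : X -> Zvec -> Wvec -> R) (d : X -> X -> R)
  (b : X -> Yvec -> R) (a : alphas) : R :=
  \sum_(y : Yvec) \sum_(z : Zvec) \sum_(w : Wvec) \sum_(xh : X) \sum_(x : X)
     d x xh * b xh y * (\prod_(i < n) a i (y i) (z i) (w i)) * p x z w.

Definition PZW (p : X -> Zvec -> Wvec -> R) (j : 'I_n) (z : X) (w : W j) : R :=
  \sum_(x : X) \sum_(zz : Zvec) \sum_(ww : Wvec | (zz j == z) && (ww j == w)) p x zz ww.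

Definition PW (p : X -> Zvec -> Wvec -> R) (j : 'I_n) (w : W j) : R :=
  \sum_(x : X) \sum_(zz : Zvec) \sum_(ww : Wvec | ww j == w) p x zz ww.

Definition PYW (p : X -> Zvec -> Wvec -> R) (j : 'I_n) (aj : Y j -> X -> W j -> R)
  (y : Y j) (w : W j) : R :=
  \sum_(z : X) aj y z w * PZW p z w.

Definition PY (p : X -> Zvec -> Wvec -> R) (j : 'I_n) (aj : Y j -> X -> W j -> R)
  (y : Y j) : R :=
  \sum_(w : W j) PYW p aj y w.

(* zeta'_j = I(Y_j ; W_j), with the convention 0 log 0 = 0 *)
Definition zeta' (p : X -> Zvec -> Wvec -> R) (j : 'I_n)
  (aj : Y j -> X -> W j -> R) : R :=
  \sum_(y : Y j) \sum_(w : W j)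
    (if PYW p aj y w == 0 then 0
     else PYW p aj y w * ln (PYW p aj y w / (PY p aj y * PW p w))).

Definition U (p : X -> Zvec -> Wvec -> R) (d : X -> X -> R) (rho : R) (j : 'I_n)
  (a : alphas) (b : X -> Yvec -> R) : R :=
  xi' p d b a + rho * zeta' p (a j).

Definition V (p : X -> Zvec -> Wvec -> R) (d : X -> X -> R)
  (a : alphas) (b : X -> Yvec -> R) : R :=
  xi' p d b a.

Definition Psi' (p : X -> Zvec -> Wvec -> R) (d : X -> X -> R) (rho : R)
  (a : alphas) (b : X -> Yvec -> R) : R :=
  xi' p d b a + rho * \sum_(i < n) zeta' p (a i).

End Game.

From mathcomp Require Import all_boot all_order all_algebra.
From mathcomp Require Import reals exp.
Import Order.TTheory GRing.Theory Num.Theory.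
Local Open Scope ring_scope.

(* Psi' is an exact potential: it differs from sender j's cost only by
   rho * sum_(i != j) zeta'_i, which does not depend on alpha^(j), and from
   the receiver's cost only by rho * sum_i zeta'_i, which does not depend on
   beta.  A unilateral deviation lowering a player's cost would therefore
   lower Psi' by the same amount, contradicting minimality. *)

Section Potential.
Context {R : realType} {n : nat} {X : finType} {W Y : 'I_n -> finType}.
Variables (p : X -> Zvec n X -> Wvec W -> R) (d : X -> X -> R) (rho : R).

Definition zeta'_others (j : 'I_n) (a : @alphas R n X W Y) : R :=
  \sum_(i < n | i != j) zeta' p (a i).

Lemma Psi'_U (j : 'I_n) (a : @alphas R n X W Y) (b : X -> Yvec Y -> R) :
  Psi' p d rho a b = U p d rho j a b + rho * zeta'_others j a.
Proof. by rewrite /Psi' /U /zeta'_others (bigD1 j) //= mulrDr addrA. Qed.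

Lemma Psi'_V (a : @alphas R n X W Y) (b : X -> Yvec Y -> R) :
  Psi' p d rho a b = V p d a b + rho * \sum_(i < n) zeta' p (a i).
Proof. by []. Qed.

Lemma zeta'_others_eq {j : 'I_n} {a a' : @alphas R n X W Y} :
  (forall i, i != j -> a' i = a i) -> zeta'_others j a' = zeta'_others j a.
Proof. by move=> eq_a; apply: eq_bigr => i /eq_a ->. Qed.

Lemma in_A'_deviation {j : 'I_n} {a a' : @alphas R n X W Y} :
  (forall i, in_A' (a i)) -> in_A' (a' j) ->
  (forall i, i != j -> a' i = a i) -> forall i, in_A' (a' i).
Proof. by move=> hA hj eq_a i; case: (eqVneq i j) => [-> // | /eq_a ->]. Qed.

End Potential.

Theorem mainTheorem8 (R : realType) (n : nat) (X : finType)
  (W Y : 'I_n -> finType)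
  (p : X -> Zvec n X -> Wvec W -> R) (d : X -> X -> R) (rho : R)
  (a_star : @alphas R n X W Y) (b_star : X -> Yvec Y -> R) :
  (2 <= n)%N ->
  (0 < #|X|)%N -> (forall i, 0 < #|W i|)%N -> (forall i, 0 < #|Y i|)%N ->
  is_pmf p ->
  (forall x xh, 0 <= d x xh) ->
  (* ((a_star), b_star) is a minimizer of Psi' over prod_i A'_i x B' *)
  (forall i, in_A' (a_star i)) -> in_B' b_star ->
  (forall (a : @alphas R n X W Y) (b : X -> Yvec Y -> R),
     (forall i, in_A' (a i)) -> in_B' b ->
     Psi' p d rho a_star b_star <= Psi' p d rho a b) ->
  (* Nash equilibrium *)
  (forall (j : 'I_n) (a_bar : @alphas R n X W Y),
     in_A' (a_bar j) -> (forall i, i != j -> a_bar i = a_star i) ->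
     U p d rho j a_star b_star <= U p d rho j a_bar b_star)
  /\
  (forall b_bar : X -> Yvec Y -> R, in_B' b_bar ->
     V p d a_star b_star <= V p d a_star b_bar).
Proof.
move=> _ _ _ _ _ _ hA hB hmin; split.
- move=> j a_bar hj eq_a.
  have := hmin a_bar b_star (in_A'_deviation hA hj eq_a) hB.
  by rewrite !(Psi'_U _ _ _ j) (zeta'_others_eq _ eq_a) lerD2r.
- move=> b hb; have := hmin a_star b hA hb.
  by rewrite !Psi'_V lerD2r.
Qed.
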